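(* Let $k$ be even, $\pi\in\mathcal B_{k/2}$, $\mathcal G$ a countable set, and let $g=(g_1,\dots,g_k)\in\mathcal G^k$ be a $\pi$-adopted sequence (indices of $g$ read cyclically, $g_{k+1}:=g_1$). If $\{m,m+l\}\in\pi$ with $m<m+l\le k$ and $l>1$, then $$g_m=g_{m+l+1}\quad\text{and}\quad g_{m+1}=g_{m+l}.$$
   Context: A pair-partition of $\{1,\dots,k\}$ is a partition all of whose blocks have exactly two elements; it is crossing if there exist $1\le a<b<c<d\le k$ with $\{a,c\},\{b,d\}\in\pi$, and non-crossing otherwise. For even $k$, $\mathcal B_{k/2}$ denotes the set of non-crossing pair-partitions of $\{1,\dots,k\}$. For $k\ge 4$, $\pi\in\mathcal B_{k/2}$ and a block $\{m,m+1\}\in\pi$ with $1\le m\le k-2$, $\pi\setminus^\bullet\{m,m+1\}\in\mathcal B_{k/2-1}$ denotes the pair-partition of $\{1,\dots,k-2\}$ obtained by deleting the block $\{m,m+1\}$ and relabelling every remaining element $a>m$ as $a-2$. $\pi$-adopted sequences. Let $\mathcal G$ be a countable set and $\pi\in\mathcal B_{k/2}$. A sequence $g=(g_1,\dots,g_k)\in\mathcal G^k$ is $\pi$-adopted, defined recursively in $k$, as follows. For $k=2$ (so $\pi=\{\{1,2\}\}$), $g$ is $\pi$-adopted iff $g_1\neq g_2$. For $k\ge 4$, $g$ is $\pi$-adopted iff for every block of $\pi$ of the form $\{m,m+1\}$ with $1\le m\le k-2$: (a) $g_m=g_{m+2}$ and $g_{m+1}\neq g_s$ for all $s\neq m+1$;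 and (b) the sequence $(g_1,\dots,g_m,g_{m+3},\dots,g_k)\in\mathcal G^{k-2}$, obtained by deleting $g_{m+1}$ and $g_{m+2}$, is $\pi\setminus^\bullet\{m,m+1\}$-adopted. *)

From mathcomp Require Import all_boot.
Set Implicit Arguments. Unset Strict Implicit. Unset Printing Implicit Defensive.

Definition in_block (i : nat) (p : nat * nat) : bool := (p.1 == i) || (p.2 == i).

Definition pair_partition (k : nat) (pi : seq (nat * nat)) : Prop :=
  (forall p, p \in pi -> 1 <= p.1 /\ p.1 < p.2 /\ p.2 <= k) /\
  (forall i, 1 <= i <= k -> count (in_block i) pi = 1).

Definition crossing (pi : seq (nat * nat)) : Prop :=
  exists a b c d, [/\ a < b, b < c, c < d, (a, c) \in pi & (b, d) \in pi].

Definition noncrossing_pair_partition (k : nat) (pi : seq (nat * nat)) : Prop :=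
  pair_partition k pi /\ ~ crossing pi.

Definition relabel (m a : nat) : nat := if m < a then a - 2 else a.

Definition delete_block (pi : seq (nat * nat)) (m : nat) : seq (nat * nat) :=
  [seq (relabel m p.1, relabel m p.2) | p <- pi & p != (m, m.+1)].

(* sequences g = (g_1,...,g_k) are functions nat -> T read at indices 1..k;
   deleting g_{m+1}, g_{m+2}: *)
Definition delete_two {T : Type} (g : nat -> T) (m : nat) : nat -> T :=
  fun i => if i <= m then g i else g (i + 2).

(* adopted n pi g : g (of length k = 2n) is pi-adopted *)
Fixpoint adopted {T : Type} (n : nat) (pi : seq (nat * nat)) (g : nat -> T) : Prop :=
  match n with
  | 0 => False
  | n1.+1 =>
      if n1 is 0 then g 1 <> g 2
      else
        forall m, (m, m.+1) \in pi -> 1 <= m -> m <= n.*2 - 2 ->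
          (g m = g (m + 2) /\
           (forall s, 1 <= s <= n.*2 -> s <> m.+1 -> g m.+1 <> g s)) /\
          adopted n1 (delete_block pi m) (delete_two g m)
  end.

Definition gcyc {T : Type} (k : nat) (g : nat -> T) (i : nat) : T :=
  if i == k.+1 then g 1 else g i.

From mathcomp Require Import all_boot.
From mathcomp Require Import zify.
Set Implicit Arguments. Unset Strict Implicit.

(* Every block (a, b) of a non-crossing pair partition with b > a + 1 encloses
   an adjacent block (j, j + 1).  Adoptedness gives g_j = g_{j+2}, and deleting
   that block together with g_{j+1}, g_{j+2} leaves an adopted sequence for a
   smaller non-crossing pair partition, in which (a, b) has become (a, b - 2)
   while the entries at a, a + 1, b, b + 1 are unchanged.  Iterating
   until the block is adjacent, adoptedness yields g_a = g_{a+2}.  When b = k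
   the cyclic reading asks for g_a = g_1 instead; there one deletes adjacent
   blocks to the left of a, which exist by the enclosure argument applied to
   the block of 1. *)

Lemma count_eq1_eq (T : eqType) (P : pred T) (s : seq T) x y :
  count P s = 1 -> x \in s -> y \in s -> P x -> P y -> x = y.
Proof.
rewrite -size_filter => c1 xs ys Px Py.
have : x \in filter P s by rewrite mem_filter Px.
have : y \in filter P s by rewrite mem_filter Py.
by case: (filter P s) c1 => [|z []] //= _; rewrite !inE => /eqP-> /eqP->.
Qed.

Lemma in_block_fst a b : in_block a (a, b).
Proof. by rewrite /in_block eqxx. Qed.

Lemma in_block_snd a b : in_block b (a, b).
Proof. by rewrite /in_block eqxx orbT. Qed.

Section PairPartition.

Variables (k : nat) (pi : seq (nat * nat)).
Hypothesis pp : pair_partition k pi.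

Lemma block_bounds a b : (a, b) \in pi -> [/\ 0 < a, a < b & b <= k].
Proof. by case: pp => bounds _ /bounds[? []]. Qed.

Lemma block_uniq i p q : p \in pi -> q \in pi ->
  in_block i p -> in_block i q -> p = q.
Proof.
case: p => a b ab q_pi ip iq; have [a0 ltab bk] := block_bounds ab.
apply: (count_eq1_eq _ ab q_pi ip iq).
case: pp => _ -> //; move: ip; rewrite /in_block /= => /orP[] /eqP <-; lia.
Qed.

Lemma block_cover i : 0 < i <= k -> exists2 p, p \in pi & in_block i p.
Proof.
case: pp => _ count1 /count1 c1.
have /hasP[p] : has (in_block i) pi by rewrite has_count c1.
by exists p.
Qed.

End PairPartition.

Section NoncrossingPairPartition.

Variables (k : nat) (pi : seq (nat * nat)).
Hypothesis ncpp : noncrossing_pair_partition k pi.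

Let pp := ncpp.1.

Lemma block_nested a b c d : (a, b) \in pi -> (c, d) \in pi -> a < c < b -> d < b.
Proof.
move=> ab cd /andP[ltac ltcb]; have [_ ltcd _] := block_bounds pp cd.
case: (ltngtP d b) => // [ltbd | edb]; first by case: ncpp.2; exists a, c, b, d.
by subst; have [] := block_uniq pp ab cd (in_block_snd a b) (in_block_snd c b); lia.
Qed.

Lemma inner_adjacent_block a b : (a, b) \in pi -> a.+1 < b ->
  exists2 j, (j, j.+1) \in pi & a < j /\ j.+1 < b.
Proof.
have [w] := ubnP (b - a); elim: w a b => // w IH a b ltw ab ltab.
have [a0 _ bk] := block_bounds pp ab.
have [[c d] cd] := block_cover pp (i := a.+1) ltac:(lia).
have [c0 ltcd dk] := block_bounds pp cd.
rewrite /in_block /= => /orP[] /eqP ea; subst.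
- have ltdb := block_nested ab cd ltac:(lia).
  have [ltd | ed] : a.+2 < d \/ d = a.+2 by lia.
  + by have [j jp ?] := IH a.+1 d ltac:(lia) cd ltd; exists j => //; lia.
  + by subst; exists a.+1 => //; lia.
- have [ltca | eca] : c < a \/ c = a by lia.
  + by have := block_nested cd ab ltac:(lia); lia.
  + by subst; have [] := block_uniq pp ab cd (in_block_fst a b) (in_block_fst a a.+1); lia.
Qed.

Lemma prefix_adjacent_block m : (m, k) \in pi -> 1 < m ->
  exists2 j, (j, j.+1) \in pi & 0 < j /\ j.+1 < m.
Proof.
move=> mk ltm; have [_ ltmk _] := block_bounds pp mk.
have [[c d] cd] := block_cover pp (i := 1) ltac:(lia).
have [c0 ltcd dk] := block_bounds pp cd.
rewrite /in_block /= => /orP[] /eqP ec; subst; last lia.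
have ltdm : d < m.
  case: (ltngtP d m) => // [ltmd | edm]; first by have := block_nested cd mk ltac:(lia); lia.
  by subst; have [] := block_uniq pp cd mk (in_block_snd 1 m) (in_block_fst m k); lia.
have [ltd | ed] : 2 < d \/ d = 2 by lia.
- by have [j jp ?] := inner_adjacent_block cd ltd; exists j => //; lia.
- by subst; exists 1.
Qed.

End NoncrossingPairPartition.

Lemma relabel_le j a : a <= j -> relabel j a = a.
Proof. by rewrite /relabel leqNgt => /negbTE->. Qed.

Lemma relabel_gt j a : j < a -> relabel j a = a - 2.
Proof. by rewrite /relabel => ->. Qed.

Lemma relabel_eq j a i : a \notin [:: j; j.+1] ->
  (relabel j a == i) = (a == if i < j then i else i + 2).
Proof.
rewrite !inE /relabel => /norP[/eqP ? /eqP ?].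
by case: ifP => ?; case: ifP => ?; apply/eqP/eqP; lia.
Qed.

Lemma relabel_lt j a b : a \notin [:: j; j.+1] -> b \notin [:: j; j.+1] ->
  (relabel j a < relabel j b) = (a < b).
Proof.
rewrite !inE /relabel => /norP[/eqP ? /eqP ?] /norP[/eqP ? /eqP ?].
by case: ifP => ?; case: ifP => ?; apply/idP/idP; lia.
Qed.

Lemma mem_delete_block pi j a b : (a, b) \in pi -> a != j ->
  (relabel j a, relabel j b) \in delete_block pi j.
Proof.
move=> ab naj; apply/mapP; exists (a, b) => //.
by rewrite mem_filter ab andbT; apply: contra naj => /eqP[->].
Qed.

Section DeleteAdjacentBlock.

Variables (k j : nat) (pi : seq (nat * nat)).
Hypotheses (pp : pair_partition k.+2 pi) (jp : (j, j.+1) \in pi).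

Lemma block_avoids_adjacent a b : (a, b) \in pi -> (a, b) != (j, j.+1) ->
  (a \notin [:: j; j.+1]) && (b \notin [:: j; j.+1]).
Proof.
move=> ab /eqP nab; rewrite !inE.
have off i : in_block i (a, b) -> in_block i (j, j.+1) -> False.
  by move=> iab ij; apply: nab; exact: (block_uniq pp ab jp iab ij).
apply/andP; split; apply/norP; split; apply/eqP => e;
  [apply: (off j) | apply: (off j.+1) | apply: (off j) | apply: (off j.+1)];
  by rewrite /in_block /= ?e !eqxx ?orbT.
Qed.

Lemma delete_blockP p : p \in delete_block pi j ->
  exists a b, [/\ (a, b) \in pi, p = (relabel j a, relabel j b),
    a \notin [:: j; j.+1] & b \notin [:: j; j.+1]].
Proof.
case/mapP=> [[a b]]; rewrite mem_filter => /andP[nab ab] ->.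
by have /andP[? ?] := block_avoids_adjacent ab nab; exists a, b.
Qed.

Lemma delete_block_pair_partition : pair_partition k (delete_block pi j).
Proof.
have [j0 _ jk] := block_bounds pp jp.
split=> [_ /delete_blockP[a [b [ab -> offa offb]]] | i ik] /=.
  have [a0 ltab bk] := block_bounds pp ab.
  move: offa offb; rewrite !inE /relabel => /norP[/eqP ? /eqP ?] /norP[/eqP ? /eqP ?].
  by case: ifP => ?; case: ifP => ?; lia.
pose i' := if i < j then i else i + 2.
have c1 : count (in_block i') pi = 1 by case: pp => _ -> //; rewrite /i'; case: ifP => ?; lia.
rewrite /delete_block count_map count_filter -c1; apply: eq_in_count => -[a b] ab /=.
case: (eqVneq (a, b) (j, j.+1)) => [[-> ->] | nab] /=.
  by rewrite andbF /in_block /i' /=; case: ifP => ?; apply/esym/norP; split; apply/eqP; lia.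
have /andP[offa offb] := block_avoids_adjacent ab nab.
by rewrite andbT /in_block /= !relabel_eq.
Qed.

Lemma delete_block_noncrossing : ~ crossing pi -> ~ crossing (delete_block pi j).
Proof.
move=> nc [a [b [c [d [ab bc cd ac bd]]]]].
have [a0 [c0 [ac0 [ea ec] oa oc]]] := delete_blockP ac.
have [b0 [d0 [bd0 [eb ed] ob od]]] := delete_blockP bd.
subst a b c d; apply: nc; exists a0, b0, c0, d0.
by split=> //; [rewrite -(relabel_lt oa ob) | rewrite -(relabel_lt ob oc) |
  rewrite -(relabel_lt oc od)].
Qed.

End DeleteAdjacentBlock.

Lemma delete_two_le (T : Type) (g : nat -> T) j i : i <= j -> delete_two g j i = g i.
Proof. by rewrite /delete_two => ->. Qed.

(* When g_j = g_{j+2}, deleting g_{j+1}, g_{j+2} is the same as deleting g_j, g_{j+1}. *)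
Lemma delete_two_ge (T : Type) (g : nat -> T) j i : g j = g (j + 2) -> j <= i ->
  delete_two g j i = g (i + 2).
Proof.
rewrite /delete_two => gj le_ji; case: ifP => // le_ij.
by have -> : i = j by apply/eqP; rewrite eqn_leq le_ij.
Qed.

Lemma adopted_delete_adjacent (T : Type) n pi (g : nat -> T) j :
  noncrossing_pair_partition n.+1.*2 pi -> adopted n.+1 pi g ->
  (j, j.+1) \in pi -> 0 < j -> j.+2 <= n.+1.*2 ->
  [/\ g j = g (j + 2), noncrossing_pair_partition n.*2 (delete_block pi j)
    & adopted n (delete_block pi j) (delete_two g j)].
Proof.
case: n => [|n] [pp nc] ad jp j0 jk; first lia.
have [[gj _] ad'] := ad j jp j0 ltac:(lia).
rewrite doubleS in pp; split=> //; split.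
- exact: delete_block_pair_partition pp jp.
- exact: delete_block_noncrossing pp jp nc.
Qed.

Lemma adopted_block_ends (T : Type) n pi (g : nat -> T) m l :
  noncrossing_pair_partition n.*2 pi -> adopted n pi g ->
  (m, m + l) \in pi -> 0 < l ->
  g (m + 1) = g (m + l) /\ (m + l < n.*2 -> g m = g (m + l + 1)).
Proof.
elim: n pi g m l => [|n IH] pi g m l ncpp ad ml l0 //.
have [m0 _ mlk] := block_bounds ncpp.1 ml.
have [el | lt1l] : l = 1 \/ 1 < l by lia.
  subst l; split=> // mlt; rewrite addn1 in ml.
  have [gm _ _] := adopted_delete_adjacent ncpp ad ml m0 ltac:(lia).
  by rewrite gm; congr g; lia.
have [j jp [ltmj ltjl]] := inner_adjacent_block ncpp ml ltac:(lia).
have [gj ncpp' ad'] := adopted_delete_adjacent ncpp ad jp ltac:(lia) ltac:(lia).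
have ml' : (m, m + (l - 2)) \in delete_block pi j.
  have -> : (m, m + (l - 2)) = (relabel j m, relabel j (m + l)).
    by rewrite relabel_le ?relabel_gt; try lia; congr pair; lia.
  by apply: mem_delete_block ml _; rewrite neq_ltn ltmj.
have [IH1 IH2] := IH _ _ _ _ ncpp' ad' ml' ltac:(lia).
have gm1 : delete_two g j (m + 1) = g (m + 1) by apply: delete_two_le; lia.
have gml : delete_two g j (m + (l - 2)) = g (m + l).
  by rewrite delete_two_ge //; [congr g | ]; lia.
have gm : delete_two g j m = g m by apply: delete_two_le; lia.
have gml1 : delete_two g j (m + (l - 2) + 1) = g (m + l + 1).
  by rewrite delete_two_ge //; [congr g | ]; lia.
split; first by rewrite -gm1 -gml.
by move=> mlt; rewrite -gm -gml1; apply: IH2; lia.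
Qed.

Lemma adopted_last_block (T : Type) n pi (g : nat -> T) m :
  noncrossing_pair_partition n.*2 pi -> adopted n pi g ->
  (m, n.*2) \in pi -> g m = g 1.
Proof.
elim: n pi g m => [|n IH] pi g m ncpp ad mk //.
have [m0 ltmk _] := block_bounds ncpp.1 mk.
have [-> // | lt1m] : m = 1 \/ 1 < m by lia.
have [j jp [j0 ltjm]] := prefix_adjacent_block ncpp mk lt1m.
have [gj ncpp' ad'] := adopted_delete_adjacent ncpp ad jp j0 ltac:(lia).
have mk' : (m - 2, n.*2) \in delete_block pi j.
  have -> : (m - 2, n.*2) = (relabel j m, relabel j n.+1.*2).
    by rewrite !relabel_gt; try lia; congr pair; lia.
  by apply: mem_delete_block mk _; rewrite neq_ltn (ltnW ltjm) orbT.
have g1 : delete_two g j 1 = g 1 by apply: delete_two_le.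
have gm : delete_two g j (m - 2) = g m.
  by rewrite delete_two_ge //; [congr g | ]; lia.
by rewrite -g1 -gm (IH _ _ _ ncpp' ad' mk').
Qed.

Theorem mainTheorem2 (G : countType) (k : nat) (pi : seq (nat * nat)) (g : nat -> G) :
  ~~ odd k ->
  noncrossing_pair_partition k pi ->
  adopted k./2 pi g ->
  forall m l : nat, (m, m + l) \in pi -> m + l <= k -> 1 < l ->
    gcyc k g m = gcyc k g (m + l + 1) /\ gcyc k g (m + 1) = gcyc k g (m + l).
Proof.
move=> ev ncpp ad m l ml lek lt1l.
have ek : k = k./2.*2 by rewrite -{1}(odd_double_half k) (negbTE ev).
rewrite ek in ncpp.
have [inner outer] := adopted_block_ends ncpp ad ml (ltnW lt1l).
have gcycE i : i <= k -> gcyc k g i = g i.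
  by rewrite /gcyc => lei; case: eqP => // ?; lia.
split; last by rewrite !gcycE //; lia.
rewrite gcycE; last lia.
have [mlt | eml] : m + l < k \/ m + l = k by lia.
  by rewrite gcycE ?outer //; lia.
rewrite /gcyc eml addn1 eqxx; rewrite eml ek in ml.
exact: adopted_last_block ncpp ad ml.
Qed.
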